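(* Let $\mathcal{A}$ be a finite set of at least 3 alternatives, $N\ge2$, $i\in\{1,\dots,N\}$, and $w:\underline{\mathcal{P}}^N\to\underline{\mathcal{P}}$ satisfy Unanimity, IIA and Non-Dictatorship. Then the self-reference system $(w,\Omega_i)$ with valid elements $\mathcal{P}^N$ is quasi-Gödelian with respect to $\Upsilon_i=(\mathbf{c},\dots,\mathbf{i},\dots,\mathbf{c})$: there exists $q\in\mathcal{P}^N$ with $q\le\neg(\Upsilon_i\ast q)$ such that $(\Upsilon_i,q)$ does not satisfy both quasi-consistency $q\le\neg(\Upsilon_i\ast\neg q)$ and quasi-completeness ($\neg(\Upsilon_i\ast q)$ and $\neg(\Upsilon_i\ast\neg q)$ are inconsistent).
   Context: $\mathcal{P}$: weak orders on $\mathcal{A}$; $\underline{\mathcal{P}}=\mathcal{P}\cup\{\mathbf{c}\}$, $\mathbf{c}$ a new element (contradictory preference cycle). Strictness order: $r\le s$ iff every strict preference of $s$ is one of $r$; $\mathbf{c}$ bottom, $\mathbf{i}$ (total indifference) top; $\wedge,\vee$ meet and join; negation $\neg\mathbf{c}=\mathbf{i}$, $\neg\mathbf{i}=\mathbf{c}$, and otherwise $\neg r$ reverses all strict preferences of $r$. On $\underline{\mathcal{P}}^N$ all operations and the order are coordinatewise; $\mathcal{P}^N$ are the valid profiles, and $p,q$ are inconsistent if $p_j\wedge q_j=\mathbf{c}$ for some $j$. $\Omega_i((p_1,\dots,p_N),r)=(\mathbf{c},\dots,p_i\wedge r,\dots,\mathbf{c})$ (position $i$), and $e\ast f:=\Omega_i(e,w(f))$;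 $\neg\Upsilon\ast d$ means $\neg(\Upsilon\ast d)$. Unanimity: if all individuals of $p\in\mathcal{P}^N$ strictly prefer $a$ to $b$, so does $w(p)$. IIA: the aggregate comparison of $a,b$ depends only on individuals' comparisons of $a,b$ (for these axioms $\mathbf{c}$ is read as a preference cycle, i.e. an intransitive assignment of pairwise comparisons). Dictator at $j$: for all $p\in\mathcal{P}^N$, $w(p)=\mathbf{c}\Rightarrow p_j=\mathbf{i}$ and $p_j\ne\mathbf{i}\Rightarrow w(p)\le p_j$. Non-Dictatorship: no dictator. *)

From mathcomp Require Import all_boot.
Set Implicit Arguments. Unset Strict Implicit. Unset Printing Implicit Defensive.

Section Prefs.
Variable A : finType.

(* A binary relation on A, stored as a finite function: R (a,b) = "a is at
   least as good as b". *)
Definition wrel := {ffun A * A -> bool}.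

Definition wcomplete (R : A -> A -> bool) : bool :=
  [forall a, forall b, R a b || R b a].
Definition wtransitive (R : A -> A -> bool) : bool :=
  [forall a, forall b, forall c, R a b ==> R b c ==> R a c].

Definition is_weak_order (R : wrel) : bool :=
  wcomplete (fun a b => R (a, b)) && wtransitive (fun a b => R (a, b)).

Definition worder := {R : wrel | is_weak_order R}.

(* underline P = P + {c}; None is the contradictory element c *)
Definition pref := option worder.
Definition pc : pref := None.

Definition wstrict (r : worder) (a b : A) : bool :=
  val r (a, b) && ~~ val r (b, a).

Lemma tot_wo : is_weak_order [ffun _ => true].
Proof.
apply/andP; split.
  by apply/forallP=> a; apply/forallP=> b; rewrite !ffunE.
by apply/forallP=> a; apply/forallP=> b; apply/forallP=> c; rewrite !ffunE.
Qed.
Definition tot : worder := exist (fun R : wrel => is_weak_order R) _ tot_wo.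
Definition pi : pref := Some tot.

Definition rev_rel (R : wrel) : wrel := [ffun x => R (x.2, x.1)].
Lemma rev_wo (r : worder) : is_weak_order (rev_rel (val r)).
Proof.
case: r => R /= /andP [/forallP Hc /forallP Ht]; apply/andP; split.
  apply/forallP=> a; apply/forallP=> b; rewrite !ffunE /=.
  by move/forallP: (Hc b) => /(_ a); rewrite orbC.
apply/forallP=> a; apply/forallP=> b; apply/forallP=> c; rewrite !ffunE /=.
apply/implyP=> Hba; apply/implyP=> Hcb.
by move/forallP: (Ht c) => /(_ b) /forallP /(_ a) /implyP /(_ Hcb) /implyP /(_ Hba).
Qed.
Definition wrev (r : worder) : worder := exist (fun R : wrel => is_weak_order R) _ (rev_wo r).

Definition ple (r s : pref) : bool :=
  match r, s with
  | None, _ => true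
  | Some _, None => false
  | Some r', Some s' => [forall a, forall b, wstrict s' a b ==> wstrict r' a b]
  end.

(* meet: the greatest lower bound w.r.t. ple (it always exists; the default
   c of the pick is never used) *)
Definition is_glb (x r s : pref) : bool :=
  [&& ple x r, ple x s & [forall y : pref, (ple y r && ple y s) ==> ple y x]].
Definition pmeet (r s : pref) : pref :=
  if [pick x | is_glb x r s] is Some x then x else pc.

Definition pneg (r : pref) : pref :=
  match r with
  | None => pi
  | Some r' => if r' == tot then pc else Some (wrev r')
  end.

(* the pairwise comparison relation of an element of underline P
   (used only for valid elements) *)
Definition pcmp (r : pref) (a b : A) : bool :=
  if r is Some r' then val r' (a, b) else false.
Definition pstrict (r : pref) (a b : A) : bool :=
  if r is Some r' then wstrict r' a b else false.

Variable N : nat.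

Definition profile := {ffun 'I_N -> pref}.

Definition valid (p : profile) : bool := [forall j, p j != pc].
Definition prof_le (p q : profile) : bool := [forall j, ple (p j) (q j)].
Definition prof_neg (p : profile) : profile := [ffun j => pneg (p j)].
Definition inconsistent (p q : profile) : Prop := exists j, pmeet (p j) (q j) = pc.

Definition Omega (i : 'I_N) (p : profile) (r : pref) : profile :=
  [ffun j => if j == i then pmeet (p i) r else pc].
Definition star (w : profile -> pref) (i : 'I_N) (e f : profile) : profile :=
  Omega i e (w f).
Definition Upsilon (i : 'I_N) : profile := [ffun j => if j == i then pi else pc].

(* The aggregate w(p), for valid p, read as an assignment of pairwise
   comparisons cmp p: complete; if w(p) is a weak order, cmp p is that weak
   order; if w(p) = c, cmp p is an intransitive assignment (a cycle). *)
Definition reads_as (w : profile -> pref) (cmp : profile -> A -> A -> bool) : Prop :=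
  forall p, valid p ->
    wcomplete (cmp p) /\
    match w p with
    | None => ~~ wtransitive (cmp p)
    | Some r => forall a b, cmp p a b = val r (a, b)
    end.

Definition cstrict (R : A -> A -> bool) (a b : A) : bool := R a b && ~~ R b a.

Definition Unanimity (cmp : profile -> A -> A -> bool) : Prop :=
  forall p, valid p -> forall a b,
    (forall j, pstrict (p j) a b) -> cstrict (cmp p) a b.

Definition IIA (cmp : profile -> A -> A -> bool) : Prop :=
  forall p q, valid p -> valid q -> forall a b,
    (forall j, pcmp (p j) a b = pcmp (q j) a b /\ pcmp (p j) b a = pcmp (q j) b a) ->
    cmp p a b = cmp q a b /\ cmp p b a = cmp q b a.

Definition Dictator (w : profile -> pref) (j : 'I_N) : Prop :=
  forall p, valid p ->
    (w p = pc -> p j = pi) /\ (p j <> pi -> ple (w p) (p j)).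

Definition NonDictatorship (w : profile -> pref) : Prop :=
  ~ exists j, Dictator w j.

End Prefs.

From Pilot Require Import Defs.
From mathcomp Require Import all_boot.
Set Implicit Arguments. Unset Strict Implicit. Unset Printing Implicit Defensive.

(* Arrow's theorem, proved below by the pivotal-voter argument, shows that an
   aggregator satisfying Unanimity and IIA either has a dictator or returns the
   contradiction c on some valid profile q.  The first is excluded by
   Non-Dictatorship.  In the second case Upsilon_i * q is c in every coordinate,
   so its negation is i everywhere and bounds q.  Quasi-completeness would make
   some coordinate of not (Upsilon_i * not q) equal to c; that coordinate can
   only be i, and quasi-consistency then gives q_i <= c, which no valid profile
   satisfies. *)

Section Preferences.
Variable A : finType.

Lemma worder_total (r : worder A) a b : val r (a, b) || val r (b, a).
Proof. by case: r => R /= /andP [/forallP /(_ a) /forallP /(_ b)]. Qed.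

Lemma worder_trans (r : worder A) a b c :
  val r (a, b) -> val r (b, c) -> val r (a, c).
Proof.
case: r => R /= /andP [_ /forallP /(_ a) /forallP /(_ b) /forallP /(_ c)].
by move=> /implyP H /H /implyP.
Qed.

Lemma worder_strict_inj (r s : worder A) :
  (forall a b, wstrict r a b = wstrict s a b) -> r = s.
Proof.
move=> Ers; apply: val_inj; apply/ffunP => [[a b]].
have notstrict (t : worder A) : val t (a, b) = ~~ wstrict t b a.
  rewrite /wstrict; case Eab: (val t (a, b)); first by rewrite andbF.
  by have := worder_total t a b; rewrite Eab /= => ->.
by rewrite !notstrict Ers.
Qed.

Lemma ple_refl (x : pref A) : ple x x.
Proof. by case: x => [r|] //=; apply/'forall_'forall_implyP. Qed.

Lemma ple_pi (x : pref A) : ple x (Defs.pi A).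
Proof.
by case: x => [r|] //=; apply/'forall_'forall_implyP => a b; rewrite /wstrict /= !ffunE.
Qed.

Lemma ple_pc (x : pref A) : ple x (pc A) -> x = pc A.
Proof. by case: x. Qed.

Lemma ple_anti (x y : pref A) : ple x y -> ple y x -> x = y.
Proof.
case: x => [r|]; case: y => [s|] //= /'forall_'forall_implyP Hrs /'forall_'forall_implyP Hsr.
by congr Some; apply: worder_strict_inj => a b; apply/idP/idP => [/Hsr|/Hrs].
Qed.

Lemma pmeet_pil (x : pref A) : pmeet (Defs.pi A) x = x.
Proof.
have glb_x : is_glb x (Defs.pi A) x.
  by rewrite /is_glb ple_pi ple_refl; apply/forallP => y; apply/implyP => /andP [].
rewrite /pmeet; case: pickP => [y /and3P [_ le_yx /forallP /(_ x)]|]; last first.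
  by move=> /(_ x); rewrite glb_x.
by rewrite ple_pi ple_refl => le_xy; apply: ple_anti.
Qed.

End Preferences.

Section Profiles.
Variables (A : finType) (N : nat).

Definition strict_top (Q : A -> A -> bool) b := [forall x, (x != b) ==> cstrict Q b x].
Definition strict_bot (Q : A -> A -> bool) b := [forall x, (x != b) ==> cstrict Q x b].

Lemma cstrict_asym (Q : A -> A -> bool) a b : cstrict Q a b -> ~~ cstrict Q b a.
Proof. by rewrite /cstrict => /andP [-> _]; rewrite andbF. Qed.

Lemma pstrict_cstrict (r : pref A) a b : pstrict r a b = cstrict (pcmp r) a b.
Proof. by case: r. Qed.

Lemma pcmp_total (p : profile A N) j a b : valid p -> pcmp (p j) a b || pcmp (p j) b a.
Proof. by move/forallP/(_ j); case: (p j) => // r _; apply: worder_total. Qed.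

Definition uwrel (u : A -> nat) : wrel A := [ffun x => u x.2 <= u x.1].

Lemma uwrel_wo u : is_weak_order (uwrel u).
Proof.
apply/andP; split; apply/'forall_'forall_idP => a b; rewrite !ffunE ?leq_total //=.
by apply/'forall_implyP => c ab; apply/implyP => bc; rewrite !ffunE /= in ab bc *;
  apply: leq_trans bc ab.
Qed.

Definition uworder u : worder A := exist (@is_weak_order A) _ (uwrel_wo u).

Definition uprofile (f : 'I_N -> A -> nat) : profile A N :=
  [ffun j => Some (uworder (f j))].

Lemma valid_uprofile f : valid (uprofile f).
Proof. by apply/forallP => j; rewrite ffunE. Qed.

Lemma pcmp_uprofile f j a b : pcmp (uprofile f j) a b = (f j b <= f j a).
Proof. by rewrite ffunE /= ffunE. Qed.

Lemma pstrict_uprofile f j a b : pstrict (uprofile f j) a b = (f j b < f j a).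
Proof. by rewrite pstrict_cstrict /cstrict !pcmp_uprofile -ltnNge andb_idl // => /ltnW. Qed.

End Profiles.

Section Arrow.
Variables (A : finType) (N : nat) (R : profile A N -> A -> A -> bool).
Hypothesis card_A : 3 <= #|A|.
Hypothesis R_total : forall p a b, valid p -> R p a b || R p b a.
Hypothesis R_trans : forall p a b c, valid p -> R p a b -> R p b c -> R p a c.
Hypothesis R_unanimous : Unanimity R.
Hypothesis R_iia : IIA R.

Lemma exists_neq2 (a c : A) : exists x, (x != a) && (x != c).
Proof.
have : ~~ ([set: A] \subset [set a; c]).
  apply/negP => /subset_leq_card; rewrite cardsT cards2 => le_A2.
  by have := leq_trans card_A le_A2; case: (a != c).
by case/subsetPn => x _; rewrite !inE negb_or; exists x.
Qed.

Lemma R_of_not_cstrict p a b : valid p -> ~~ cstrict (R p) b a -> R p a b.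
Proof.
move=> vp; rewrite /cstrict negb_and negbK; case/orP => // nRba.
by have := R_total a b vp; rewrite (negbTE nRba) orbF.
Qed.

Lemma cstrict_trans p a b c : valid p ->
  cstrict (R p) a b -> cstrict (R p) b c -> cstrict (R p) a c.
Proof.
move=> vp /andP [Rab nRba] /andP [Rbc nRcb]; rewrite /cstrict (R_trans vp Rab Rbc).
by apply: contra nRcb => /(R_trans vp)/(_ Rab).
Qed.

Definition agree_on (p q : profile A N) a b :=
  forall j, pcmp (p j) a b = pcmp (q j) a b /\ pcmp (p j) b a = pcmp (q j) b a.

Lemma cstrict_iia p q a b : valid p -> valid q -> agree_on p q a b ->
  cstrict (R p) a b = cstrict (R q) a b.
Proof. by move=> vp vq /(R_iia vp vq) [Eab Eba]; rewrite /cstrict Eab Eba. Qed.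

Lemma extremal_no_middle p a b c :
  valid p -> (forall j, strict_top (pcmp (p j)) b || strict_bot (pcmp (p j)) b) ->
  a != b -> c != b -> a != c -> R p a b -> R p b c -> False.
Proof.
move=> vp extreme ab cb ac Rab Rbc.
(* Everybody ranks c above a, and b stays where it was relative to a and c. *)
pose f j x := if x == b then (if strict_top (pcmp (p j)) b then 3 else 0)
              else if x == c then 2 else 1.
have vq := valid_uprofile f; set q := uprofile f in vq *.
have agree x : x != b -> agree_on p q x b.
  move=> xb j; rewrite !pcmp_uprofile /f eqxx (negbTE xb).
  have := extreme j; case: ifP => [top _|_ /= bot];
    [move/forallP: top | move/forallP: bot] => /(_ x);
    by rewrite xb /cstrict => /andP [-> /negbTE ->]; case: (x == c).
have [Rqab _] := R_iia vp vq (agree a ab).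
have [_ Rqbc] := R_iia vp vq (agree c cb).
have /andP [_ /negP []] : cstrict (R q) c a.
  apply: R_unanimous => // j.
  by rewrite pstrict_uprofile /f (negbTE ab) (negbTE cb) (negbTE ac) eqxx.
by apply: (R_trans vq (b := b)); [rewrite -Rqab | rewrite -Rqbc].
Qed.

Lemma extremal p b :
  valid p -> (forall j, strict_top (pcmp (p j)) b || strict_bot (pcmp (p j)) b) ->
  strict_top (R p) b || strict_bot (R p) b.
Proof.
move=> vp extreme; apply/negPn/negP; rewrite negb_or => /andP [].
move=> /forallPn [a]; rewrite negb_imply => /andP [ab /(R_of_not_cstrict vp) Rab].
move=> /forallPn [c]; rewrite negb_imply => /andP [cb /(R_of_not_cstrict vp) Rbc].
have [eac|ac] := eqVneq a c; last exact: (extremal_no_middle vp extreme ab cb ac Rab Rbc).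
subst c; have [d /andP [da db]] := exists_neq2 a b.
case/orP: (R_total d b vp) => [Rdb|Rbd].
  exact: (extremal_no_middle vp extreme db ab da Rdb Rbc).
by apply: (extremal_no_middle vp extreme ab db _ Rab Rbd); rewrite eq_sym.
Qed.

Definition stage b k : profile A N :=
  uprofile (fun j x => if j < k then nat_of_bool (x == b) else nat_of_bool (x != b)).

Definition pivotal b k :=
  strict_bot (R (stage b k)) b && strict_top (R (stage b k.+1)) b.

Lemma stage_extreme b k : strict_top (R (stage b k)) b || strict_bot (R (stage b k)) b.
Proof.
apply: extremal (valid_uprofile _) _ => j.
rewrite /strict_top /strict_bot /cstrict; case: (ltnP j k) => jk; apply/orP;
  [left|right]; apply/'forall_implyP => x xb; rewrite !pcmp_uprofile (negbTE xb) eqxx.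
- by rewrite jk.
- by rewrite ltnNge jk.
Qed.

Lemma exists_pivotal b : exists k : 'I_N, pivotal b k.
Proof.
have top_N : strict_top (R (stage b N)) b.
  apply/'forall_implyP => y yb; apply: R_unanimous (valid_uprofile _) _ _ _ => j.
  by rewrite pstrict_uprofile ltn_ord eqxx (negbTE yb).
have bot_0 : strict_bot (R (stage b 0)) b.
  apply/'forall_implyP => y yb; apply: R_unanimous (valid_uprofile _) _ _ _ => j.
  by rewrite pstrict_uprofile /= eqxx (negbTE yb).
have [m top_m min_m] := ex_minnP (ex_intro (fun k => strict_top (R (stage b k)) b) N top_N).
have [x /andP [xb _]] := exists_neq2 b b.
case: m top_m min_m => [top_0 _|k top_k min_k].
  move/forallP/(_ x): bot_0; rewrite xb /= => /cstrict_asym.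
  by move/forallP/(_ x): top_0; rewrite xb /= => ->.
have kN : k < N := min_k N top_N.
exists (Ordinal kN); rewrite /pivotal top_k andbT.
case/orP: (stage_extreme b k) => // top_k'.
by have := min_k _ top_k'; rewrite ltnn.
Qed.

Definition dictates_off (d : 'I_N) b := forall p, valid p -> forall a c,
  a != b -> c != b -> a != c -> pstrict (p d) a c -> cstrict (R p) a c.

Lemma pivotal_dictates_off b (k : 'I_N) : pivotal b k -> dictates_off k b.
Proof.
case/andP=> bot_k top_k1 p vp a c ab cb ac p_ac.
(* q agrees with stage b k on {a, b}, with stage b k.+1 on {b, c}, and with p
   on {a, c}. *)
pose f (j : 'I_N) x := if x == b then (if j < k then 3 else if j == k then 2 else 0)
  else if x == a then (if j == k then 3 else 1 + ~~ pcmp (p j) c a)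
  else if x == c then (if j == k then 1 else 1 + ~~ pcmp (p j) a c) else 1.
have vq := valid_uprofile f; set q := uprofile f in vq *.
have ca : c != a by rewrite eq_sym.
have q_ab : cstrict (R q) a b.
  rewrite -(cstrict_iia (valid_uprofile _) vq (_ : agree_on (stage b k) q a b)).
    by move/forallP/(_ a): bot_k; rewrite ab.
  move=> j; rewrite !pcmp_uprofile /f eqxx (negbTE ab) eqxx /=.
  have [->|jk] := eqVneq j k; first by rewrite ltnn.
  by case: (j < k); case: (pcmp (p j) c a).
have q_bc : cstrict (R q) b c.
  rewrite -(cstrict_iia (valid_uprofile _) vq (_ : agree_on (stage b k.+1) q b c)).
    by move/forallP/(_ c): top_k1; rewrite cb.
  move=> j; rewrite !pcmp_uprofile /f eqxx (negbTE cb) (negbTE ca) eqxx /=.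
  have [->|jk] := eqVneq j k; first by rewrite ltnn ltnSn.
  rewrite ltnS (leq_eqVlt j k) val_eqE (negbTE jk) /=.
  by case: (j < k); case: (pcmp (p j) a c).
rewrite (cstrict_iia vp vq (_ : agree_on p q a c)); first exact: cstrict_trans q_ab q_bc.
move=> j; rewrite !pcmp_uprofile /f (negbTE ab) (negbTE cb) (negbTE ca) !eqxx /=.
have [->|_] := eqVneq j k; first by move: p_ac; rewrite pstrict_cstrict => /andP [-> /negbTE ->].
by have := pcmp_total j a c vp; case: (pcmp (p j) a c); case: (pcmp (p j) c a).
Qed.

Lemma dictates_off_pivotal b x (k d : 'I_N) :
  pivotal b k -> x != b -> dictates_off d x -> d = k.
Proof.
case/andP=> bot_k top_k1 xb d_x; have [y /andP [yx yb]] := exists_neq2 x b.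
have [bx by_] : b != x /\ b != y by rewrite !(eq_sym b).
case: (ltngtP d k) => [lt_dk|lt_kd|/val_inj //].
- have := d_x (stage b k) (valid_uprofile _) b y bx yx by_.
  rewrite pstrict_uprofile lt_dk eqxx (negbTE yb) => /(_ isT) /cstrict_asym.
  by move/forallP/(_ y): bot_k; rewrite yb /= => ->.
- have := d_x (stage b k.+1) (valid_uprofile _) y b yx bx yb.
  rewrite pstrict_uprofile (ltnNge d k.+1) lt_kd eqxx (negbTE yb) => /(_ isT) /cstrict_asym.
  by move/forallP/(_ y): top_k1; rewrite yb /= => ->.
Qed.

Theorem arrow : exists d : 'I_N, forall p, valid p -> forall a c,
  pstrict (p d) a c -> cstrict (R p) a c.
Proof.
have [b _] := card_gt0P (ltnW (ltnW card_A)).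
have [k k_b] := exists_pivotal b.
exists k => p vp a c p_ac.
have ac : a != c by apply: contraTneq p_ac => ->; rewrite pstrict_cstrict /cstrict andbN.
have [x /andP [xa xc]] := exists_neq2 a c.
have [ax cx] : a != x /\ c != x by rewrite !(eq_sym _ x).
have [xb_eq | xb] := eqVneq x b.
  by subst b; apply: pivotal_dictates_off k_b p vp a c ax cx ac p_ac.
have [kx kx_x] := exists_pivotal x.
have k_x : dictates_off k x.
  by rewrite -(dictates_off_pivotal k_b xb (pivotal_dictates_off kx_x));
    apply: pivotal_dictates_off.
exact: k_x p vp a c ax cx ac p_ac.
Qed.

End Arrow.

Section Aggregation.
Variables (A : finType) (N : nat) (w : profile A N -> pref A).

Lemma star_UpsilonE i q :
  star w i (Upsilon A i) q = [ffun j => if j == i then w q else pc A].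
Proof.
by apply/ffunP => j; rewrite /star /Omega !ffunE; case: (j == i) => //; rewrite eqxx pmeet_pil.
Qed.

Lemma contradictory_witness i q : valid q -> w q = pc A ->
  prof_le q (prof_neg (star w i (Upsilon A i) q)) /\
  ~ ( prof_le q (prof_neg (star w i (Upsilon A i) (prof_neg q))) /\
      inconsistent (prof_neg (star w i (Upsilon A i) q))
                   (prof_neg (star w i (Upsilon A i) (prof_neg q))) ).
Proof.
move=> vq wq.
have negstar_q : prof_neg (star w i (Upsilon A i) q) = [ffun => Defs.pi A].
  by rewrite star_UpsilonE wq; apply/ffunP => j; rewrite !ffunE; case: (j == i).
split; first by apply/forallP => j; rewrite negstar_q ffunE ple_pi.
case=> /forallP /(_ i) le_qi [j]; rewrite negstar_q ffunE pmeet_pil.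
rewrite star_UpsilonE !ffunE in le_qi *; rewrite eqxx in le_qi.
case: (j == i) => [neg_wq | //].
by move: le_qi; rewrite neg_wq => /ple_pc qi; move/forallP/(_ i): vq; rewrite qi.
Qed.

Lemma dictator_of_consistent (cmp : profile A N -> A -> A -> bool) :
  3 <= #|A| -> reads_as w cmp -> Unanimity cmp -> IIA cmp ->
  (forall p, valid p -> w p != pc A) -> exists d, Dictator w d.
Proof.
move=> card_A read unanimous iia consistent.
have w_order p : valid p -> exists2 r, w p = Some r & forall a b, cmp p a b = val r (a, b).
  move=> vp; have [_] := read p vp; case wp: (w p) => [r|] cmp_r; first by exists r.
  by have := consistent p vp; rewrite wp.
have cmp_total p a b : valid p -> cmp p a b || cmp p b a.
  by move=> vp; have [/forallP/(_ a)/forallP/(_ b)] := read p vp.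
have cmp_trans p a b c : valid p -> cmp p a b -> cmp p b c -> cmp p a c.
  by move=> vp; have [r _ cmp_r] := w_order p vp; rewrite !cmp_r; apply: worder_trans.
have [d d_dict] := arrow card_A cmp_total cmp_trans unanimous iia.
exists d => p vp; split; first by move=> wp; have := consistent p vp; rewrite wp.
move=> _; have [r -> cmp_r] := w_order p vp.
case pd: (p d) => [s|]; last by move/forallP/(_ d): vp; rewrite pd.
apply/'forall_'forall_implyP => a b s_ab.
by have := d_dict p vp a b; rewrite pd /cstrict !cmp_r => /(_ s_ab).
Qed.

End Aggregation.

Theorem theorem11 (A : finType) (N : nat) (i : 'I_N)
  (w : profile A N -> pref A) :
  3 <= #|A| -> 2 <= N ->
  (exists cmp : profile A N -> A -> A -> bool,
      reads_as w cmp /\ Unanimity cmp /\ IIA cmp) ->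
  NonDictatorship w ->
  exists q : profile A N,
    valid q /\
    prof_le q (prof_neg (star w i (Upsilon A i) q)) /\
    ~ ( prof_le q (prof_neg (star w i (Upsilon A i) (prof_neg q))) /\
        inconsistent (prof_neg (star w i (Upsilon A i) q))
                     (prof_neg (star w i (Upsilon A i) (prof_neg q))) ).
Proof.
move=> card_A _ [cmp [read [unanimous iia]]] nondictatorial.
case: (boolP [exists q, valid q && (w q == pc A)]) => [|consistent].
  by case/existsP=> q /andP [vq /eqP wq]; exists q; split; last exact: contradictory_witness.
case: nondictatorial; apply: (dictator_of_consistent card_A read unanimous iia) => p vp.
by apply: contra consistent => wp; apply/existsP; exists p; rewrite vp.
Qed.
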